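(* Let $p$ be an odd prime, $K$ an algebraically closed field of characteristic $\ne p$, and $n=p^st$ with $\gcd(p,t)=1$ and $s,t\ge1$. Every toral elementary abelian $p$-subgroup of $\mathrm{PGL}_n(K)$ with disconnected centralizer in $\mathrm{PGL}_n(K)$ is conjugate to a subgroup of the form $D_r\times(H\otimes I_{p^r})$, where $1\le r\le s$, $n=p^rk$, and $H$ is either trivial or a toral elementary abelian $p$-subgroup of $\mathrm{PGL}_k(K)$ with $C_{\mathrm{PGL}_k(K)}(H)$ connected.
   Context: Toral: contained in a maximal torus. Fix a primitive $p$-th root of unity $\beta\in K$. For $r\ge1$, $0\le s'\le r-1$, $A_{s'}$ is the $p^r\times p^r$ diagonal matrix with $(A_{s'})_{ii}=\beta^{\lfloor(i-1)/p^{s'}\rfloor}$ and $\bar A_{s'}$ the image in $\mathrm{PGL}_n(K)$ of $I_k\otimes A_{s'}$ (block diagonal, $k$ copies), $n=p^rk$. $D_r=\langle\bar A_0,\dots,\bar A_{r-1}\rangle$. For $H\le\mathrm{PGL}_k(K)$, $H\otimes I_{p^r}$ is the image of $\{h\otimes I_{p^r}\}$ (each entry $h_{ab}$ replaced by $h_{ab}I_{p^r}$). *)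

From HB Require Import structures.
From mathcomp Require Import all_boot all_order all_algebra.
Set Implicit Arguments.
Unset Strict Implicit.
Unset Printing Implicit Defensive.
Import Order.TTheory GRing.Theory Num.Theory.
Local Open Scope ring_scope.

(* Conventions: a subgroup G of PGL_m(K) is represented by its full preimage
   in GL_m(K), a predicate on 'M[K]_m (saturated under nonzero scalars). *)

Section PGL.
Variable K : fieldType.

Definition proj_eq m (A B : 'M[K]_m) : Prop := exists2 c : K, c != 0 & A = c *: B.

Definition pgl_subgroup m (S : 'M[K]_m -> Prop) : Prop :=
  [/\ (forall A, S A -> A \in unitmx),
      (forall c : K, c != 0 -> S (c%:M)),
      (forall A B, S A -> S B -> S (A *m B)) &
      (forall A, S A -> S (invmx A))].

(* the image in PGL_m(K) is a finite elementary abelian p-group *)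
Definition pgl_elem_abelian (p : nat) m (S : 'M[K]_m -> Prop) : Prop :=
  [/\ pgl_subgroup S,
      (exists s : seq 'M[K]_m, forall A, S A -> exists2 B, B \in s & proj_eq A B),
      (forall A B, S A -> S B -> proj_eq (A *m B) (B *m A)) &
      (forall A, S A -> exists c : K, A ^+ p = c%:M)].

(* toral: contained in a maximal torus of PGL_m(K), i.e. in a conjugate
   g^-1 T g of the image T of the invertible diagonal matrices. *)
Definition pgl_toral m (S : 'M[K]_m -> Prop) : Prop :=
  exists2 g : 'M[K]_m, g \in unitmx &
    forall A, S A -> is_diag_mx (g *m A *m invmx g).

Definition pgl_centralizer m (S : 'M[K]_m -> Prop) : 'M[K]_m -> Prop :=
  fun g => g \in unitmx /\
    forall A, S A -> proj_eq (g *m A *m invmx g) A.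

Inductive gl_regular m : ('M[K]_m -> K) -> Prop :=
| reg_const (c : K) : gl_regular (fun _ => c)
| reg_coord (i j : 'I_m) : gl_regular (fun A => A i j)
| reg_invdet : gl_regular (fun A => (\det A)^-1)
| reg_add f g : gl_regular f -> gl_regular g -> gl_regular (fun A => f A + g A)
| reg_mul f g : gl_regular f -> gl_regular g -> gl_regular (fun A => f A * g A).

Definition gl_closed m (Z : 'M[K]_m -> Prop) : Prop :=
  (forall A, Z A -> A \in unitmx) /\
  exists F : ('M[K]_m -> K) -> Prop,
    (forall f, F f -> gl_regular f) /\
    (forall A, A \in unitmx -> (Z A <-> forall f, F f -> f A = 0)).

(* Zariski closed subsets of PGL_m(K) (quotient topology), given by their
   (scalar-saturated) preimages in GL_m(K) *)
Definition pgl_closed m (Z : 'M[K]_m -> Prop) : Prop :=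
  gl_closed Z /\ forall A (c : K), Z A -> c != 0 -> Z (c *: A).

Definition pgl_connected m (X : 'M[K]_m -> Prop) : Prop :=
  ~ exists Z1 Z2 : 'M[K]_m -> Prop,
      [/\ pgl_closed Z1 /\ pgl_closed Z2,
          (forall A, X A -> Z1 A \/ Z2 A),
          (exists A, X A /\ Z1 A),
          (exists A, X A /\ Z2 A) &
          (forall A, ~ [/\ X A, Z1 A & Z2 A])].

Definition pgl_trivial m : 'M[K]_m -> Prop :=
  fun A => exists2 c : K, c != 0 & A = c%:M.

(* \bar A_{s'} in PGL_n(K), n = p^r k: image of I_k (x) A_{s'} *)
Definition Abar (beta : K) (p r s' n : nat) : 'M[K]_n :=
  \matrix_(i < n, j < n)
    (if i == j then beta ^+ (((i : nat) %% p ^ r) %/ p ^ s')%N else 0).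

Definition Dr (beta : K) (p r n : nat) : 'M[K]_n -> Prop :=
  fun M => exists c : K, exists e : 'I_r -> nat, c != 0 /\
    M = c *: \big[mulmx/1%:M]_(s' < r) (Abar beta p r s' n) ^+ (e s').

(* entry of h : 'M_k at nat indices (0 outside the range) *)
Definition mx_at k (h : 'M[K]_k) (a b : nat) : K :=
  match insub a, insub b with
  | Some a', Some b' => h a' b'
  | _, _ => 0
  end.

(* h (x) I_q in 'M_n (n = k q): entry h_ab replaced by h_ab I_q *)
Definition tens_id k (q n : nat) (h : 'M[K]_k) : 'M[K]_n :=
  \matrix_(i < n, j < n)
    (if ((i : nat) %% q == (j : nat) %% q)%N
     then mx_at h ((i : nat) %/ q)%N ((j : nat) %/ q)%N else 0).

Definition tens_group k (q n : nat) (H : 'M[K]_k -> Prop) : 'M[K]_n -> Prop :=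
  fun M => exists2 h, H h & M = tens_id q n h.

(* preimage of the subgroup generated by two commuting subgroups *)
Definition pgl_prod m (S T : 'M[K]_m -> Prop) : 'M[K]_m -> Prop :=
  fun M => exists A B, [/\ S A, T B & M = A *m B].

Definition pgl_conj m (S T : 'M[K]_m -> Prop) : Prop :=
  exists2 g : 'M[K]_m, g \in unitmx &
    forall M, S M <-> T (g *m M *m invmx g).

End PGL.

From HB Require Import structures.
From mathcomp Require Import all_boot all_order all_algebra.
From mathcomp Require Import all_fingroup ring.
From Stdlib Require Import Classical.
Set Implicit Arguments. Unset Strict Implicit. Unset Printing Implicit Defensive.
Import GRing.Theory.
Local Open Scope ring_scope.

(* If every element of the centralizer C(E) commuted with E, then with any two of its elements
   C(E) would contain every invertible point of the affine line through them, and since a regular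
   function restricted to such a line is a polynomial over a power of the determinant, C(E) would be
   connected.  So, after diagonalising the toral group E, some g in C(E) fails to commute with some
   A in E.  For a permutation sigma in the support of det g, each M in E with g M g^-1 = beta^e M
   satisfies M (sigma i) (sigma i) = beta^e M i i, and a power A0 of A has weight beta.  The
   eigenvalues of A0 are then c beta^x, all with the same multiplicity k, and reordering the basis
   along the sigma-orbits of the k points where A0 takes the value c writes E as D_1 x (H (x) I_p),
   H being the weight-one part of E restricted to those points.  H is again diagonal elementary
   abelian; if its centralizer is disconnected, recurse with k = n / p. *)

Section DiagonalMatrices.
Variables (K : fieldType) (n : nat).
Implicit Types A B M X : 'M[K]_n.

Lemma invmx_unique A B : A *m B = 1%:M -> invmx A = B.
Proof.
move=> AB; have [uA _] := mulmx1_unit AB.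
by rewrite -[invmx A]mulmx1 -AB mulmxA mulVmx // mul1mx.
Qed.

Lemma invmxM A B : A \in unitmx -> B \in unitmx ->
  invmx (A *m B) = invmx B *m invmx A.
Proof.
move=> uA uB; apply: invmx_unique.
by rewrite mulmxA -[A *m B *m _]mulmxA mulmxV // mulmx1 mulmxV.
Qed.

Lemma conjmx_inj (Q : 'M[K]_n) X Y : Q \in unitmx ->
  Q *m X *m invmx Q = Q *m Y *m invmx Q -> X = Y.
Proof.
move=> uQ /(congr1 (fun Z => invmx Q *m Z *m Q)).
by rewrite /= !mulmxA !mulVmx // !mul1mx !mulmxKV.
Qed.

Lemma perm_mx_conjE (s : 'S_n) M i j :
  (perm_mx s *m M *m invmx (perm_mx s : 'M[K]_n)) i j = M (s i) (s j).
Proof.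
have -> : invmx (perm_mx s : 'M[K]_n) = perm_mx s^-1.
  by apply: invmx_unique; rewrite -perm_mxM mulgV perm_mx1.
by rewrite -row_permE -col_permE !mxE.
Qed.

Lemma is_diag_mxE M : is_diag_mx M -> M = diag_mx (\row_i M i i).
Proof.
move=> /is_diag_mxP dM; apply/matrixP => i j; rewrite !mxE.
by case: eqVneq => [->|/dM ->]; rewrite ?mulr1n ?mulr0n.
Qed.

Lemma diag_mulmxE A B i : is_diag_mx A -> is_diag_mx B ->
  (A *m B) i i = A i i * B i i.
Proof.
by move=> /is_diag_mxE -> /is_diag_mxE ->; rewrite mulmx_diag !mxE !eqxx !mulr1n.
Qed.

Lemma is_diag_mxM A B : is_diag_mx A -> is_diag_mx B -> is_diag_mx (A *m B).
Proof. by move=> /is_diag_mxE -> /is_diag_mxE ->; rewrite mulmx_diag. Qed.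

Lemma is_diag_mxZ (c : K) M : is_diag_mx M -> is_diag_mx (c *: M).
Proof.
by move=> /is_diag_mxP dM; apply/is_diag_mxP => i j /dM; rewrite mxE => ->; rewrite mulr0.
Qed.

Lemma is_diag_mxX M e : is_diag_mx M -> is_diag_mx (M ^+ e).
Proof.
move=> dM; elim: e => [|e IH]; first by rewrite expr0 -idmxE scalar_mx_is_diag.
by rewrite exprS -mulmxE is_diag_mxM.
Qed.

Lemma diag_exprE M e i : is_diag_mx M -> (M ^+ e) i i = M i i ^+ e.
Proof.
move=> dM; elim: e => [|e IH]; first by rewrite !expr0 -idmxE mxE eqxx.
by rewrite !exprS -mulmxE diag_mulmxE ?is_diag_mxX // IH.
Qed.

Lemma diag_unitmx_entry M i : M \in unitmx -> is_diag_mx M -> M i i != 0.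
Proof.
move=> + /is_diag_mxE dM; rewrite unitmxE unitfE [in \det _]dM det_diag (bigD1 i) //=.
by rewrite mulf_eq0 negb_or mxE => /andP [].
Qed.

Lemma diag_invmxE M : M \in unitmx -> is_diag_mx M ->
  invmx M = diag_mx (\row_i (M i i)^-1).
Proof.
move=> uM dM; apply: invmx_unique; rewrite [M in M *m _]is_diag_mxE // mulmx_diag.
apply/matrixP => i j; rewrite !mxE.
by case: eqVneq => [->|_]; rewrite ?mulr1n ?mulr0n ?mulfV ?diag_unitmx_entry.
Qed.

Lemma is_diag_invmx M : M \in unitmx -> is_diag_mx M -> is_diag_mx (invmx M).
Proof. by move=> uM dM; rewrite diag_invmxE // diag_mx_is_diag. Qed.

Lemma diag_invmx_entry M i : M \in unitmx -> is_diag_mx M -> invmx M i i = (M i i)^-1.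
Proof. by move=> uM dM; rewrite diag_invmxE // !mxE eqxx mulr1n. Qed.

Lemma mulmx_diagr_entry X M i j : is_diag_mx M -> (X *m M) i j = X i j * M j j.
Proof. by move=> /is_diag_mxE dM; rewrite {1}dM mul_mx_diag !mxE. Qed.

Lemma mulmx_diagl_entry X M i j : is_diag_mx M -> (M *m X) i j = M i i * X i j.
Proof. by move=> /is_diag_mxE dM; rewrite {1}dM mul_diag_mx !mxE. Qed.

Lemma unitmx_perm_support (g : 'M[K]_n) : g \in unitmx ->
  exists s : 'S_n, forall i, g i (s i) != 0.
Proof.
move=> ug; apply: NNPP => nosupp; move: ug.
rewrite unitmxE unitfE /determinant big1 ?eqxx // => s _.
have [i gi] : exists i, g i (s i) = 0.
  by apply: NNPP => ns; apply: nosupp; exists s => i; apply/eqP => gi; apply: ns; exists i.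
by rewrite (bigD1 i) //= gi mul0r mulr0.
Qed.

(* Comparing the (i, s i) entries of g M = c M g. *)
Lemma conj_diag_perm_support (g M : 'M[K]_n) (s : 'S_n) (c : K) i :
  g \in unitmx -> is_diag_mx M -> g i (s i) != 0 ->
  g *m M *m invmx g = c *: M -> M (s i) (s i) = c * M i i.
Proof.
move=> ug dM gi_neq0 gM.
have : g *m M = c *: (M *m g) by rewrite scalemxAl -gM mulmxKV.
move/(congr1 (fun Z : 'M[K]_n => Z i (s i))); rewrite /= [RHS]mxE.
rewrite (mulmx_diagr_entry g) // (mulmx_diagl_entry g) // mulrA [g i _ * _]mulrC.
by move/(mulIf gi_neq0).
Qed.

End DiagonalMatrices.

Section PermWeight.
Variables (K : fieldType) (n : nat) (s : 'S_n).
Implicit Types M N : 'M[K]_n.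

Definition perm_weight (c : K) M := forall i, M (s i) (s i) = c * M i i.

Lemma perm_weightX c M x i : perm_weight c M ->
  M ((s ^+ x)%g i) ((s ^+ x)%g i) = c ^+ x * M i i.
Proof.
move=> wM; elim: x => [|x IH]; first by rewrite expg0 perm1 expr0 mul1r.
by rewrite expgSr permM wM IH exprS mulrA [c * _]mulrC.
Qed.

Lemma perm_weightM c d M N : is_diag_mx M -> is_diag_mx N ->
  perm_weight c M -> perm_weight d N -> perm_weight (c * d) (M *m N).
Proof. by move=> dM dN wM wN i; rewrite !diag_mulmxE // wM wN mulrACA. Qed.

Lemma perm_weight_expr c M e : is_diag_mx M ->
  perm_weight c M -> perm_weight (c ^+ e) (M ^+ e).
Proof. by move=> dM wM i; rewrite !diag_exprE // wM exprMn. Qed.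

Lemma perm_weightV c M : M \in unitmx -> is_diag_mx M ->
  perm_weight c M -> perm_weight c^-1 (invmx M).
Proof. by move=> uM dM wM i; rewrite !diag_invmx_entry // wM invfM. Qed.

Lemma perm_weight_scalar (a : K) : perm_weight 1 a%:M.
Proof. by move=> i; rewrite !mxE !eqxx mul1r. Qed.

End PermWeight.

Section ConjugateSubgroup.
Variables (K : fieldType) (m : nat).
Implicit Types (V M N g : 'M[K]_m) (S : 'M[K]_m -> Prop).

Lemma conjmxZ n (V : 'M[K]_(m, n)) (c : K) (f : 'M[K]_n) :
  conjmx V (c *: f) = c *: conjmx V f.
Proof. by rewrite /conjmx -scalemxAr -scalemxAl. Qed.

Lemma conjumxM V M N : V \in unitmx -> conjmx V (M *m N) = conjmx V M *m conjmx V N.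
Proof. by move=> uV; apply: conjmxM; rewrite inE stablemx_unit. Qed.

Lemma conjumx_scalar V (c : K) : V \in unitmx -> conjmx V c%:M = c%:M.
Proof. by move=> uV; rewrite conjmx_scalar ?row_free_unit. Qed.

Lemma unitmx_conjumx V M : V \in unitmx -> (conjmx V M \in unitmx) = (M \in unitmx).
Proof. by move=> uV; rewrite conjumx // !unitmx_mul unitmx_inv uV andbT. Qed.

Lemma conjumxV V M : V \in unitmx -> M \in unitmx ->
  conjmx V (invmx M) = invmx (conjmx V M).
Proof.
by move=> uV uM; apply/esym/invmx_unique; rewrite -conjumxM // mulmxV // conjumx_scalar.
Qed.

Lemma conjumxX V M e : V \in unitmx -> conjmx V (M ^+ e) = conjmx V M ^+ e.
Proof.
move=> uV; elim: e => [|e IH]; first by rewrite !expr0 -!idmxE conjumx_scalar.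
by rewrite !exprS -!mulmxE conjumxM // IH.
Qed.

Lemma pgl_conj_conjmx V S : V \in unitmx -> pgl_conj S (fun M => S (conjmx (invmx V) M)).
Proof. by move=> uV; exists V => // M; rewrite -conjumx // conjmxK. Qed.

Lemma pgl_elem_abelian_conjmx V p S : V \in unitmx -> pgl_elem_abelian p S ->
  pgl_elem_abelian p (fun M => S (conjmx V M)).
Proof.
move=> uV [[S_unit S_scalar S_mul S_inv] [reps reps_cover] S_comm S_exp].
have SV_unit M : S (conjmx V M) -> M \in unitmx by rewrite -(unitmx_conjumx _ uV); apply: S_unit.
split.
- split=> // [c c_neq0 | M N SM SN | M SM]; first by rewrite conjumx_scalar //; apply: S_scalar.
    by rewrite conjumxM //; apply: S_mul.
  by rewrite conjumxV //; [apply: S_inv | apply: SV_unit].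
- exists (map (conjmx (invmx V)) reps) => M SM.
  have [N Nreps [c c_neq0 VMN]] := reps_cover _ SM.
  exists (conjmx (invmx V) N); first exact: map_f.
  by exists c => //; rewrite -conjmxZ -VMN conjmxK.
- move=> M N SM SN; have [c c_neq0 VMN] := S_comm _ _ SM SN.
  exists c => //; apply: (@conjmx_inj _ _ V) => //.
  by rewrite -!conjumx // conjmxZ !conjumxM.
- move=> M SM; have [c VMp] := S_exp _ SM.
  exists c; apply: (@conjmx_inj _ _ V) => //.
  by rewrite -!conjumx // conjumxX // VMp conjumx_scalar.
Qed.

Lemma pgl_centralizer_conjmx V S g : V \in unitmx -> pgl_centralizer S g ->
  pgl_centralizer (fun M => S (conjmx V M)) (conjmx (invmx V) g).
Proof.
move=> uV [ug Cg]; have uVi : invmx V \in unitmx by rewrite unitmx_inv.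
have ug' : conjmx (invmx V) g \in unitmx by rewrite unitmx_conjumx.
split=> // M SM; have [c c_neq0 gM] := Cg _ SM; exists c => //.
apply: (@conjmx_inj _ _ V) => //.
rewrite -!(conjumx _ uV) (conjumxM _ _ uV) (conjumxM _ _ uV) (conjumxV uV ug').
by rewrite conjmxVK // conjmxZ -gM.
Qed.

End ConjugateSubgroup.

Section LineConnected.
Variables (K : closedFieldType) (m : nat).
Implicit Types A B : 'M[K]_m.

Definition line_mx A B (x : K) : 'M[K]_m := A + x *: (B - A).

Definition line_polymx A B : 'M[{poly K}]_m :=
  map_mx polyC A + 'X *: map_mx polyC (B - A).

Definition line_det A B : {poly K} := \det (line_polymx A B).

Lemma horner_line_polymx A B x i j : (line_polymx A B i j).[x] = line_mx A B x i j.
Proof. by rewrite !mxE hornerD hornerM hornerX !hornerC mulrC. Qed.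

Lemma horner_line_det A B x : (line_det A B).[x] = \det (line_mx A B x).
Proof.
have -> : line_mx A B x = map_mx (horner_eval x) (line_polymx A B).
  by apply/matrixP => i j; rewrite [RHS]mxE /horner_eval horner_line_polymx.
by rewrite det_map_mx.
Qed.

Lemma line_mx0 A B : line_mx A B 0 = A.
Proof. by rewrite /line_mx scale0r addr0. Qed.

Lemma line_mx1 A B : line_mx A B 1 = B.
Proof. by rewrite /line_mx scale1r addrC subrK. Qed.

Lemma gl_regular_on_line f A B : gl_regular f ->
  exists (P : {poly K}) (a : nat), forall x, (line_det A B).[x] != 0 ->
    f (line_mx A B x) = P.[x] / (line_det A B).[x] ^+ a.
Proof.
set d := line_det A B.
have dX_neq0 a x : d.[x] != 0 -> d.[x] ^+ a != 0 by move=> ?; rewrite expf_neq0.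
elim=> {f} [c | i j | | f g _ [P [a HP]] _ [Q [b HQ]] | f g _ [P [a HP]] _ [Q [b HQ]]].
- by exists c%:P, 0%N => x _; rewrite hornerC divr1.
- by exists (line_polymx A B i j), 0%N => x _; rewrite divr1 horner_line_polymx.
- by exists 1, 1%N => x _; rewrite hornerC expr1 horner_line_det div1r.
- exists (P * d ^+ b + Q * d ^+ a), (a + b)%N => x dx.
  rewrite HP // HQ // hornerD !hornerM !horner_exp exprD.
  by field; rewrite !dX_neq0.
- exists (P * Q), (a + b)%N => x dx.
  rewrite HP // HQ // !hornerM exprD.
  by field; rewrite !dX_neq0.
Qed.

(* On the line through A and B, the two closed sets are cut out by rational functions whose
   numerators P, Q satisfy P Q det = 0 on all of K; K being infinite, one factor is the zero
   polynomial, contradicting f B <> 0, g A <> 0 or A \in unitmx. *)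
Lemma pgl_connected_line_closed (X : 'M[K]_m -> Prop) : (forall A, X A -> A \in unitmx) ->
  (forall A B x, X A -> X B -> line_mx A B x \in unitmx -> X (line_mx A B x)) ->
  pgl_connected X.
Proof.
move=> XU Xline [Z1 [Z2 [[[[_ [F1 [F1r F1E]]] _] [[_ [F2 [F2r F2E]]] _]] cover
  [A [XA Z1A]] [B [XB Z2B]] disj]]].
have [f [F1f fB]] : exists f, F1 f /\ f B <> 0.
  apply: NNPP => nf; apply: (disj B); split=> //.
  by apply/(F1E _ (XU _ XB)) => f F1f; apply: NNPP => fB; apply: nf; exists f.
have [g [F2g gA]] : exists g, F2 g /\ g A <> 0.
  apply: NNPP => ng; apply: (disj A); split=> //.
  by apply/(F2E _ (XU _ XA)) => g F2g; apply: NNPP => gA; apply: ng; exists g.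
have [P [a HP]] := gl_regular_on_line A B (F1r _ F1f).
have [Q [b HQ]] := gl_regular_on_line A B (F2r _ F2g).
set d := line_det A B in HP HQ.
have d_unit x : X (line_mx A B x) -> d.[x] != 0.
  by move=> /XU; rewrite horner_line_det unitmxE unitfE.
have PQ_vanish x : X (line_mx A B x) -> P.[x] * Q.[x] = 0.
  move=> Xx; have dx := d_unit x Xx.
  have Lu : line_mx A B x \in unitmx by apply: XU.
  have nz e y : y / d.[x] ^+ e = 0 -> y = 0.
    by move/eqP; rewrite mulf_eq0 invr_eq0 expf_eq0 (negPf dx) andbF orbF => /eqP.
  case: (cover _ Xx) => Z.
  - by rewrite (nz a P.[x]) ?mul0r // -HP //; apply: (proj1 (F1E _ Lu) Z).
  - by rewrite (nz b Q.[x]) ?mulr0 // -HQ //; apply: (proj1 (F2E _ Lu) Z).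
have : P * Q * d == 0.
  apply: contraT => /closed_nonrootP [x]; rewrite /root !hornerM.
  have [dx0|dx] := eqVneq d.[x] 0; first by rewrite dx0 mulr0 eqxx.
  have Lu : line_mx A B x \in unitmx by rewrite unitmxE unitfE -horner_line_det.
  by rewrite PQ_vanish ?mul0r ?eqxx //; apply: Xline.
rewrite !mulf_eq0 => /orP [/orP [] /eqP P0 | /eqP d0].
- by apply: fB; rewrite -(line_mx1 A B) HP ?P0 ?horner0 ?mul0r // d_unit ?line_mx1.
- by apply: gA; rewrite -(line_mx0 A B) HQ ?P0 ?horner0 ?mul0r // d_unit ?line_mx0.
- by move: (d_unit 0); rewrite line_mx0 d0 horner0 eqxx => /(_ XA).
Qed.

End LineConnected.

Lemma pgl_centralizer_connected (K : closedFieldType) n (E : 'M[K]_n -> Prop) :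
  (forall g A, pgl_centralizer E g -> E A -> g *m A = A *m g) ->
  pgl_connected (pgl_centralizer E).
Proof.
move=> commE; apply: pgl_connected_line_closed => [A [] // | A B x CA CB Lu].
split=> // M EM; exists 1; first exact: oner_neq0.
have cL : line_mx A B x *m M = M *m line_mx A B x.
  rewrite /line_mx mulmxDl mulmxDr -scalemxAl -scalemxAr mulmxBl mulmxBr.
  by rewrite (commE A) ?(commE B).
by rewrite scale1r cL mulmxK.
Qed.

Lemma pgl_disconnected_centralizer (K : closedFieldType) n (E : 'M[K]_n -> Prop) :
  ~ pgl_connected (pgl_centralizer E) ->
  exists g A, [/\ pgl_centralizer E g, E A & g *m A <> A *m g].
Proof.
move=> nc; apply: NNPP => h; apply: nc; apply: pgl_centralizer_connected => g A Cg EA.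
by apply: NNPP => ne; apply: h; exists g, A.
Qed.

Section PglSubgroup.
Variables (K : fieldType) (m : nat) (S : 'M[K]_m -> Prop).
Hypothesis S_grp : pgl_subgroup S.

Lemma pgl_subgroup_unit M : S M -> M \in unitmx.
Proof. by case: S_grp => U _ _ _; apply: U. Qed.

Lemma pgl_subgroup_scalar (c : K) : c != 0 -> S c%:M.
Proof. by case: S_grp => _ Sc _ _; apply: Sc. Qed.

Lemma pgl_subgroupM M N : S M -> S N -> S (M *m N).
Proof. by case: S_grp => _ _ SM _; apply: SM. Qed.

Lemma pgl_subgroupV M : S M -> S (invmx M).
Proof. by case: S_grp => _ _ _ SV; apply: SV. Qed.

Lemma pgl_subgroupX M e : S M -> S (M ^+ e).
Proof.
move=> SM; elim: e => [|e IH]; last by rewrite exprS -mulmxE; apply: pgl_subgroupM.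
by rewrite expr0 -idmxE; apply: pgl_subgroup_scalar; exact: oner_neq0.
Qed.

End PglSubgroup.

Section CentralizerWeight.
Variables (K : fieldType) (p : nat) (beta : K) (n : nat).
Variables (E : 'M[K]_n -> Prop) (g : 'M[K]_n) (sigma : 'S_n).
Hypotheses (p_prime : prime p) (beta_prim : p.-primitive_root beta)
  (Eab : pgl_elem_abelian p E).
Hypotheses (Ediag : forall M, E M -> is_diag_mx M) (Cg : pgl_centralizer E g).
Hypothesis sigma_supp : forall i, g i (sigma i) != 0.

Let E_grp : pgl_subgroup E. Proof. by case: Eab. Qed.

(* The scalar by which g rescales M is a p-th root of unity because M ^+ p is a nonzero scalar. *)
Lemma pgl_centralizer_weight M : E M ->
  exists e, g *m M *m invmx g = beta ^+ e *: M /\ perm_weight sigma (beta ^+ e) M.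
Proof.
move=> EM; have [ug /(_ M EM) [c _ gM]] := Cg.
have wM : perm_weight sigma c M.
  by move=> i; exact: (conj_diag_perm_support ug (Ediag EM) (sigma_supp i) gM).
have [n0 | n_gt0] := posnP n; last first.
  pose i0 := Ordinal n_gt0.
  have [a Mp] : exists a : K, M ^+ p = a%:M by case: Eab => _ _ _; apply.
  have Mp_i0 := perm_weight_expr p (Ediag EM) wM i0.
  have a_neq0 : a != 0.
    have := diag_unitmx_entry i0 (pgl_subgroup_unit E_grp (pgl_subgroupX E_grp p EM)).
    by rewrite is_diag_mxX ?Ediag // Mp mxE eqxx mulr1n => /(_ isT).
  have /(prim_rootP beta_prim) [e ce] : c ^+ p = 1.
    by move: Mp_i0; rewrite Mp !mxE !eqxx !mulr1n -{1}[a]mul1r => /mulIf ->.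
  by exists e; rewrite -ce.
by exists 0%N; split=> [|i]; [apply/matrixP => i j|]; have := ltn_ord i; rewrite {2}n0.
Qed.

Lemma exists_weight_generator A : E A -> g *m A <> A *m g ->
  exists2 A0, E A0 & perm_weight sigma beta A0.
Proof.
move=> EA gA_neq; have [e [gA wA]] := pgl_centralizer_weight EA.
have e_coprime : coprime e p.
  rewrite coprime_sym prime_coprime //; apply/negP => /dvdnP [q eq]; apply: gA_neq.
  rewrite eq mulnC exprM (prim_expr_order beta_prim) expr1n scale1r in gA.
  by rewrite -[in RHS]gA mulmxKV //; case: Cg.
have beta_e : p.-primitive_root (beta ^+ e) by rewrite prim_root_exp_coprime.
have /(prim_rootP beta_e) [m betaE] := prim_expr_order beta_prim.
exists (A ^+ m); first exact: pgl_subgroupX.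
by rewrite [beta in perm_weight _ beta]betaE; apply: perm_weight_expr; rewrite ?Ediag.
Qed.

End CentralizerWeight.

Lemma AbarE (K : fieldType) (beta : K) p r s' n (i j : 'I_n) :
  Abar beta p r s' n i j = (i == j)%:R * beta ^+ ((i %% p ^ r) %/ p ^ s').
Proof. by rewrite mxE; case: eqVneq; rewrite ?mul1r ?mul0r. Qed.

Lemma Abar_is_diag (K : fieldType) (beta : K) p r s' n : is_diag_mx (Abar beta p r s' n).
Proof. by apply/is_diag_mxP => i j; rewrite mxE -val_eqE => /negPf ->. Qed.

Lemma Abar_mod_lift (K : fieldType) (beta : K) p r n : p.-primitive_root beta ->
  Abar beta p 1 0 n = Abar beta p r.+1 0 n.
Proof.
move=> beta_prim; apply/matrixP => i j; rewrite !AbarE !expn0 !divn1 expn1.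
rewrite -[in RHS](expr_mod _ (prim_expr_order beta_prim)).
by rewrite (modn_dvdm i (_ : (p %| p ^ r.+1)%N)) // expnS dvdn_mulr.
Qed.

Lemma eq_ord_divmod p n (i j : 'I_n) :
  (i == j) = (i %% p == j %% p)%N && (i %/ p == j %/ p)%N.
Proof.
apply/eqP/andP => [->|[/eqP eq_mod /eqP eq_div]] //.
by apply/val_inj; rewrite /= (divn_eq i p) (divn_eq j p) eq_mod eq_div.
Qed.

Section TensorIdentity.
Variables (K : fieldType) (p k n : nat).
Hypotheses (p_gt0 : (0 < p)%N) (n_eq : n = (k * p)%N).
Local Notation T := (tens_id p n).

Lemma ltn_ord_divp (i : 'I_n) : (i %/ p < k)%N.
Proof. by rewrite ltn_divLR // -n_eq. Qed.

Lemma mx_atE (h : 'M[K]_k) a b (ha : (a < k)%N) (hb : (b < k)%N) :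
  mx_at h a b = h (Ordinal ha) (Ordinal hb).
Proof. by rewrite /mx_at !insubT. Qed.

Lemma tens_idE (h : 'M[K]_k) (i j : 'I_n) :
  T h i j = (i %% p == j %% p)%N%:R * h (Ordinal (ltn_ord_divp i)) (Ordinal (ltn_ord_divp j)).
Proof.
by rewrite mxE (mx_atE _ (ltn_ord_divp i) (ltn_ord_divp j)); case: ifP; rewrite ?mul1r ?mul0r.
Qed.

Lemma sum_ord_divmod (G : nat -> K) :
  \sum_(l < n) G l = \sum_(0 <= a < k) \sum_(0 <= y < p) G (y + a * p)%N.
Proof.
rewrite -(big_mkord xpredT G) n_eq big_nat_mul; apply: eq_bigr => a _.
by rewrite -{1}[(a * p)%N]add0n big_addn mulSn addnK.
Qed.

Lemma tens_idM (X Y : 'M[K]_k) : T (X *m Y) = T X *m T Y.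
Proof.
apply/matrixP => i j; rewrite [RHS]mxE.
pose G (l : nat) := (if (i %% p == l %% p)%N then mx_at X (i %/ p) (l %/ p) else 0) *
   (if (l %% p == j %% p)%N then mx_at Y (l %/ p) (j %/ p) else 0).
rewrite (eq_bigr (fun l : 'I_n => G l)); last by move=> l _; rewrite !mxE.
rewrite sum_ord_divmod mxE.
have -> : mx_at (X *m Y) (i %/ p) (j %/ p) =
   \sum_(0 <= a < k) mx_at X (i %/ p) a * mx_at Y a (j %/ p).
  rewrite (mx_atE _ (ltn_ord_divp i) (ltn_ord_divp j)) mxE big_mkord.
  apply: eq_bigr => -[a ha] _ /=.
  by rewrite (mx_atE _ (ltn_ord_divp i) ha) (mx_atE _ ha (ltn_ord_divp j)).
have inner a : \sum_(0 <= y < p) G (y + a * p)%N =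
   (if (i %% p == j %% p)%N then mx_at X (i %/ p) a * mx_at Y a (j %/ p) else 0).
  rewrite (eq_big_nat _ _ (F2 := fun y => if y == (i %% p)%N then
      mx_at X (i %/ p) a * (if (i %% p == j %% p)%N then mx_at Y a (j %/ p) else 0)
    else 0)); last first.
    move=> y /andP [_ yp]; rewrite /G [(y + a * p)%N]addnC !modnMDl !(modn_small yp).
    rewrite divnMDl // (divn_small yp) addn0 [(i %% p == y)%N]eq_sym.
    by case: eqVneq => [->|_]; rewrite ?mul0r.
  rewrite -big_mkcond big_nat1_eq /= ltn_mod p_gt0.
  by case: ifP; rewrite ?mulr0.
rewrite (eq_bigr _ (fun a _ => inner a)).
by case: ifP => _ //; rewrite big1.
Qed.

Lemma tens_id1 : T (1%:M : 'M[K]_k) = 1%:M.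
Proof.
apply/matrixP => i j; rewrite tens_idE !mxE (eq_ord_divmod p i j).
by rewrite -val_eqE /= -natrM mulnb.
Qed.

Lemma tens_idZ c (X : 'M[K]_k) : T (c *: X) = c *: T X.
Proof. by apply/matrixP => i j; rewrite [LHS]tens_idE [in RHS]mxE tens_idE mxE mulrCA. Qed.

Lemma tens_id_unitmx (X : 'M[K]_k) : X \in unitmx ->
  T X \in unitmx /\ invmx (T X) = T (invmx X).
Proof.
move=> uX; have TX_inv : T X *m T (invmx X) = 1%:M by rewrite -tens_idM mulmxV // tens_id1.
by split; [case: (mulmx1_unit TX_inv) | exact: invmx_unique].
Qed.

Lemma tens_idX (X : 'M[K]_k) e : T (X ^+ e) = T X ^+ e.
Proof.
elim: e => [|e IH]; first by rewrite !expr0 -!idmxE tens_id1.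
by rewrite !exprS -!mulmxE tens_idM IH.
Qed.

Lemma tens_id_prod r (F : 'I_r -> 'M[K]_k) :
  T (\big[mulmx/1%:M]_(j < r) F j) = \big[mulmx/1%:M]_(j < r) T (F j).
Proof.
elim: r F => [|r IH] F; first by rewrite !big_ord0 tens_id1.
by rewrite !big_ord_recl tens_idM IH.
Qed.

Lemma tens_id_Abar (beta : K) r s' :
  T (Abar beta p r s' k) = Abar beta p r.+1 s'.+1 n.
Proof.
apply/matrixP => i j; rewrite tens_idE !AbarE (eq_ord_divmod p i j).
by rewrite -val_eqE /= expnSr expnS divnMA -modn_divl mulrA -natrM mulnb.
Qed.

(* The entries of [Abar beta p 1 0 n] depend only on [i %% p], and [T X] only couples
   indices with the same residue mod [p]. *)
Lemma tens_id_Abar_comm (beta : K) (X : 'M[K]_k) :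
  T X *m Abar beta p 1 0 n = Abar beta p 1 0 n *m T X.
Proof.
apply/matrixP => i j; rewrite mulmx_diagr_entry ?Abar_is_diag // mulmx_diagl_entry ?Abar_is_diag //.
rewrite !tens_idE !AbarE !eqxx !mul1r expn1 expn0 !divn1.
by case: eqVneq => [->|_]; rewrite ?mul0r ?mulr0 // mulrC.
Qed.

End TensorIdentity.

Lemma tens_id_tens_id (K : fieldType) p k n q k' (h : 'M[K]_k') :
  (0 < p)%N -> n = (k * p)%N -> (0 < q)%N -> k = (k' * q)%N ->
  tens_id p n (tens_id q k h) = tens_id (q * p) n h.
Proof.
move=> p_gt0 n_eq q_gt0 k_eq; apply/matrixP => i j.
rewrite mxE (mx_atE _ (ltn_ord_divp p_gt0 n_eq i) (ltn_ord_divp p_gt0 n_eq j)).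
rewrite (tens_idE q_gt0 k_eq) /=.
have div_qp (x : 'I_n) : (x %/ (q * p) = x %/ p %/ q)%N by rewrite mulnC divnMA.
have mod_qp (x : 'I_n) : (x %% (q * p) = x %% p + p * (x %/ p %% q))%N.
  rewrite {1}(divn_eq (x %% (q * p)) p) -modn_divl addnC.
  by rewrite (@modn_dvdm (q * p)) ?dvdn_mull // mulnC.
rewrite !mxE !div_qp.
have -> : (i %% (q * p) == j %% (q * p))%N =
    (i %% p == j %% p)%N && (i %/ p %% q == j %/ p %% q)%N.
  rewrite !mod_qp; apply/eqP/andP => [eq_ij|[/eqP -> /eqP ->]] //.
  have eq_mod := congr1 (modn^~ p) eq_ij.
  rewrite /= ![(_ %% p + _)%N]addnC ![(p * _)%N]mulnC !modnMDl !modn_mod in eq_mod.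
  split; apply/eqP => //.
  by move: eq_ij; rewrite eq_mod => /addnI /eqP; rewrite eqn_mul2l gtn_eqF // => /eqP.
set i' := Ordinal (ltn_ord_divp p_gt0 n_eq i); set j' := Ordinal (ltn_ord_divp p_gt0 n_eq j).
have -> : mx_at h (i %/ p %/ q) (j %/ p %/ q) = mx_at h (i' %/ q) (j' %/ q) by [].
rewrite (mx_atE h (ltn_ord_divp q_gt0 k_eq i') (ltn_ord_divp q_gt0 k_eq j')).
by case: ifP => //= _; case: ifP; rewrite ?mul1r ?mul0r.
Qed.

Section BlockDecomposition.
Variables (K : fieldType) (p : nat) (beta : K) (n : nat).
Variables (E : 'M[K]_n -> Prop) (sigma : 'S_n) (A0 : 'M[K]_n) (i0 : 'I_n).
Hypotheses (p_prime : prime p) (beta_prim : p.-primitive_root beta).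
Hypotheses (Eab : pgl_elem_abelian p E) (Ediag : forall M, E M -> is_diag_mx M).
Hypothesis Eweight : forall M, E M -> exists e, perm_weight sigma (beta ^+ e) M.
Hypotheses (EA0 : E A0) (wA0 : perm_weight sigma beta A0).

Let E_grp : pgl_subgroup E. Proof. by case: Eab. Qed.
Let p_gt0 : (0 < p)%N. Proof. exact: prime_gt0. Qed.
Let beta_neq0 : beta != 0. Proof. by rewrite (prim_root_eq0 beta_prim) -lt0n. Qed.
Let dA0 : is_diag_mx A0. Proof. exact: Ediag. Qed.

Local Notation c0 := (A0 i0 i0).

Let E_entry_neq0 M i : E M -> M i i != 0.
Proof. by move=> EM; rewrite diag_unitmx_entry ?Ediag ?(pgl_subgroup_unit E_grp). Qed.

Lemma A0_entry i : exists x : 'I_p, A0 i i = c0 * beta ^+ x.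
Proof.
have [a A0p] : exists a : K, A0 ^+ p = a%:M by case: Eab => _ _ _; apply.
have A0p_entry j : A0 j j ^+ p = a by rewrite -diag_exprE // A0p mxE eqxx.
have /(prim_rootP beta_prim) [x betaE] : (A0 i i / c0) ^+ p = 1.
  by rewrite exprMn exprVn !A0p_entry divff // -(A0p_entry i0) expf_neq0 ?E_entry_neq0.
by exists x; rewrite -betaE mulrC divfK ?E_entry_neq0.
Qed.

Definition base := [set i | A0 i i == c0].
Definition block_size := #|base|.
Definition base_nth a : 'I_n := nth i0 (enum base) a.

(* The sigma-orbit of the a-th base point, read along the powers of beta on the diagonal of A0. *)
Definition block_index (x : nat) : 'I_n := (sigma ^+ (x %% p))%g (base_nth (x %/ p)).

Lemma A0_block_index x : (x %/ p < block_size)%N ->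
  A0 (block_index x) (block_index x) = beta ^+ (x %% p) * c0.
Proof.
move=> xk; rewrite /block_index (perm_weightX _ _ wA0).
suff : base_nth (x %/ p) \in base by rewrite inE => /eqP ->.
by rewrite /base_nth -mem_enum mem_nth // -cardE.
Qed.

Lemma block_index_inj x y : (x %/ p < block_size)%N -> (y %/ p < block_size)%N ->
  block_index x = block_index y -> x = y.
Proof.
move=> xk yk eq_xy.
have eq_mod : (x %% p = y %% p)%N.
  have := congr1 (fun i => A0 i i) eq_xy; rewrite /= !A0_block_index //.
  move/(mulIf (E_entry_neq0 i0 EA0))/eqP.
  by rewrite (eq_prim_root_expr beta_prim) !modn_mod => /eqP.
move: eq_xy; rewrite /block_index eq_mod => /perm_inj /eqP.
rewrite /base_nth nth_uniq ?enum_uniq -?cardE // => /eqP eq_div.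
by rewrite (divn_eq x p) (divn_eq y p) eq_div eq_mod.
Qed.

Lemma block_index_surj i : exists2 x, (x %/ p < block_size)%N & block_index x = i.
Proof.
have [y A0i] := A0_entry i.
pose b := ((sigma ^+ y)^-1)%g i.
have yb : (sigma ^+ y)%g b = i by rewrite /b permKV.
have b_base : b \in base.
  rewrite inE; have := perm_weightX y b wA0; rewrite yb A0i mulrC.
  by move/(mulfI (expf_neq0 y beta_neq0)) => ->.
have bk : (index b (enum base) < block_size)%N by rewrite /block_size cardE index_mem mem_enum.
exists (index b (enum base) * p + y)%N; first by rewrite divnMDl // divn_small // addn0.
rewrite /block_index modnMDl modn_small // divnMDl // divn_small // addn0.
by rewrite /base_nth nth_index ?mem_enum.
Qed.

Lemma block_count : n = (block_size * p)%N.
Proof.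
have ltk x : (x %/ p < block_size)%N = (x < block_size * p)%N by rewrite ltn_divLR.
pose f (x : 'I_(block_size * p)) := block_index x.
have f_inj : injective f.
  by move=> x y /block_index_inj; rewrite !ltk !ltn_ord => /(_ isT isT) /val_inj.
have le_kp_n : (#|'I_(block_size * p)| <= #|'I_n|)%N := leq_card f f_inj.
have le_n_kp : (#|'I_n| <= #|codom f|)%N.
  apply/subset_leq_card/subsetP => i _; have [x + <-] := block_index_surj i.
  by rewrite ltk => xk; apply/codomP; exists (Ordinal xk).
rewrite card_codom // !card_ord in le_kp_n le_n_kp.
by apply/eqP; rewrite eqn_leq le_kp_n le_n_kp.
Qed.

Let ltn_ord_divp_k (i : 'I_n) : (i %/ p < block_size)%N.
Proof. exact: ltn_ord_divp p_gt0 block_count i. Qed.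

Lemma block_index_ord_inj : injective (fun i : 'I_n => block_index i).
Proof. by move=> i j /block_index_inj; rewrite !ltn_ord_divp_k => /(_ isT isT) /val_inj. Qed.

Definition block_perm : 'S_n := perm block_index_ord_inj.

Local Notation Q := (perm_mx block_perm : 'M[K]_n).

Definition base_restrict (X : 'M[K]_n) : 'M[K]_block_size :=
  diag_mx (\row_a X (base_nth a) (base_nth a)).

Lemma conj_block_perm_diag X i j : is_diag_mx X ->
  (Q *m X *m invmx Q) i j = (i == j)%:R * X (block_index i) (block_index i).
Proof.
move=> /is_diag_mxP dX; rewrite perm_mx_conjE !permE.
case: eqVneq => [->|neq_ij]; rewrite ?mul1r // mul0r dX //.
by apply: contra neq_ij => /eqP /val_inj /block_index_ord_inj ->.
Qed.

Lemma tens_id_base_restrict X i j : tens_id p n (base_restrict X) i j =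
  (i == j)%:R * X (base_nth (i %/ p)) (base_nth (i %/ p)).
Proof.
rewrite (tens_idE p_gt0 block_count) !mxE [in RHS](eq_ord_divmod p) -val_eqE /=.
by case: (_ == _ %[mod p]); case: eqVneq => [->|]; rewrite ?mulr0n ?mulr1n ?mul0r ?mul1r.
Qed.

Lemma conj_block_perm_weight_one X e : is_diag_mx X -> perm_weight sigma 1 X ->
  Q *m (A0 ^+ e *m X) *m invmx Q =
  (c0 ^+ e *: Abar beta p 1 0 n ^+ e) *m tens_id p n (base_restrict X).
Proof.
move=> dX wX; apply/matrixP => i j.
rewrite conj_block_perm_diag ?is_diag_mxM ?is_diag_mxX //.
rewrite mulmx_diagl_entry ?is_diag_mxZ ?is_diag_mxX ?Abar_is_diag //.
rewrite tens_id_base_restrict diag_mulmxE ?is_diag_mxX // diag_exprE //.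
rewrite A0_block_index ?ltn_ord_divp_k // /block_index (perm_weightX _ _ wX) expr1n mul1r.
rewrite mxE diag_exprE ?Abar_is_diag // AbarE eqxx mul1r expn1 expn0 divn1.
by rewrite exprMn; ring.
Qed.

Lemma base_restrictM X Y : is_diag_mx X -> is_diag_mx Y ->
  base_restrict (X *m Y) = base_restrict X *m base_restrict Y.
Proof.
move=> dX dY; rewrite mulmx_diag; congr diag_mx; apply/rowP => a.
by rewrite [in LHS]mxE diag_mulmxE // !mxE.
Qed.

Lemma base_restrict_scalar c : base_restrict c%:M = c%:M.
Proof. by apply/matrixP => a b; rewrite !mxE eqxx mulr1n. Qed.

Lemma base_restrictZ c X : base_restrict (c *: X) = c *: base_restrict X.
Proof. by apply/matrixP => a b; rewrite !mxE mulrnAr. Qed.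

Lemma base_restrictX X e : is_diag_mx X -> base_restrict (X ^+ e) = base_restrict X ^+ e.
Proof.
move=> dX; elim: e => [|e IH]; first by rewrite !expr0 -!idmxE base_restrict_scalar.
by rewrite !exprS -!mulmxE base_restrictM ?is_diag_mxX // IH.
Qed.

Definition base_group (h : 'M[K]_block_size) : Prop :=
  exists X, [/\ E X, perm_weight sigma 1 X & h = base_restrict X].

Lemma base_group_diag h : base_group h -> is_diag_mx h.
Proof. by move=> [X [_ _ ->]]; exact: diag_mx_is_diag. Qed.

Lemma base_group_elem_abelian : pgl_elem_abelian p base_group.
Proof.
have diagE X : E X -> is_diag_mx X by apply: Ediag.
split.
- split.
  + move=> h [X [EX _ ->]]; have uX := pgl_subgroup_unit E_grp EX.
    have [] // := @mulmx1_unit _ _ (base_restrict X) (base_restrict (invmx X)).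
    by rewrite -base_restrictM ?is_diag_invmx ?diagE // mulmxV // base_restrict_scalar.
  + move=> c c_neq0; exists c%:M; split; rewrite ?base_restrict_scalar //.
      exact: pgl_subgroup_scalar.
    exact: perm_weight_scalar.
  + move=> _ _ [X [EX wX ->]] [Y [EY wY ->]]; exists (X *m Y).
    rewrite base_restrictM ?diagE //; split=> //; first exact: pgl_subgroupM.
    by rewrite -[1]mulr1; apply: perm_weightM; rewrite ?diagE.
  + move=> _ [X [EX wX ->]]; have uX := pgl_subgroup_unit E_grp EX.
    exists (invmx X); split; first exact: pgl_subgroupV.
      by rewrite -[1]invr1; apply: perm_weightV; rewrite ?diagE.
    apply: invmx_unique.
    by rewrite -base_restrictM ?is_diag_invmx ?diagE // mulmxV // base_restrict_scalar.
- case: Eab => _ [reps reps_cover] _ _; exists (map base_restrict reps).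
  move=> _ [X [EX _ ->]]; have [Y Yreps [c c_neq0 XY]] := reps_cover X EX.
  by exists (base_restrict Y); [exact: map_f | exists c; rewrite ?XY ?base_restrictZ].
- move=> h h' /base_group_diag /is_diag_mxE -> /base_group_diag /is_diag_mxE ->.
  by exists 1; rewrite ?oner_neq0 // scale1r; apply: diag_mx_comm.
- move=> _ [X [EX _ ->]]; have [c Xp] : exists c : K, X ^+ p = c%:M by case: Eab => _ _ _; apply.
  by exists c; rewrite -base_restrictX ?diagE // Xp base_restrict_scalar.
Qed.

Lemma pgl_conj_block_decomposition :
  pgl_conj E (pgl_prod (@Dr K beta p 1 n) (@tens_group K block_size p n base_group)).
Proof.
have E_unit M : E M -> M \in unitmx by apply: pgl_subgroup_unit.
have c0e_neq0 e : c0 ^+ e != 0 by rewrite expf_neq0 ?E_entry_neq0.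
exists Q => [|M]; first exact: unitmx_perm.
split=> [EM | [_ [_ [[c [ef [c_neq0 ->]]] [_ [X [EX wX ->]] ->] QM]]]].
- have [e wM] := Eweight EM; have EA0e := pgl_subgroupX E_grp e EA0.
  pose X := invmx (A0 ^+ e) *m M.
  have EX : E X by apply: pgl_subgroupM => //; apply: pgl_subgroupV.
  have wX : perm_weight sigma 1 X.
    rewrite -(mulVf (expf_neq0 e beta_neq0)).
    apply: perm_weightM; rewrite ?is_diag_invmx ?Ediag ?E_unit //.
    by apply: perm_weightV; [exact: E_unit | exact: Ediag | exact: perm_weight_expr].
  rewrite -(mulKVmx (E_unit _ EA0e) M) -/X conj_block_perm_weight_one ?Ediag //.
  exists (c0 ^+ e *: Abar beta p 1 0 n ^+ e), (tens_id p n (base_restrict X)).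
  split=> //; last by exists (base_restrict X) => //; exists X.
  by exists (c0 ^+ e), (fun _ => e); rewrite big_ord_recl big_ord0 mulmx1.
- rewrite big_ord_recl big_ord0 mulmx1 /= in QM; set e := ef ord0 in QM.
  have -> : M = (c / c0 ^+ e) *: (A0 ^+ e *m X).
    apply: (@conjmx_inj _ _ Q); first exact: unitmx_perm.
    rewrite QM -scalemxAr -!scalemxAl conj_block_perm_weight_one ?Ediag //.
    by rewrite -scalemxAl scalerA divfK.
  rewrite -mul_scalar_mx; apply: (pgl_subgroupM E_grp).
    by apply: (pgl_subgroup_scalar E_grp); rewrite mulf_neq0 ?invr_eq0.
  exact: pgl_subgroupM (pgl_subgroupX E_grp e EA0) EX.
Qed.

End BlockDecomposition.

Lemma pgl_conj_trans (K : fieldType) m (S T U : 'M[K]_m -> Prop) :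
  pgl_conj S T -> pgl_conj T U -> pgl_conj S U.
Proof.
move=> [g ug gST] [h uh hTU]; exists (h *m g) => [|M]; first by rewrite unitmx_mul uh ug.
by rewrite gST hTU invmxM // !mulmxA.
Qed.

Section TensorLift.
Variables (K : fieldType) (p : nat) (beta : K) (n k r k' : nat).
Hypotheses (p_gt0 : (0 < p)%N) (beta_prim : p.-primitive_root beta).
Hypotheses (n_eq : n = (k * p)%N) (k_eq : k = (k' * p ^ r)%N).
Local Notation T := (tens_id p n).

Lemma Dr_mul_tens_id c1 c (e : 'I_r.+1 -> nat) :
  (c1 *: Abar beta p 1 0 n ^+ e ord0) *m
    T (c *: \big[mulmx/1%:M]_(j < r) Abar beta p r j k ^+ e (lift ord0 j)) =
  (c1 * c) *: \big[mulmx/1%:M]_(s' < r.+1) Abar beta p r.+1 s' n ^+ e s'.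
Proof.
rewrite (tens_idZ p_gt0 n_eq) (tens_id_prod p_gt0 n_eq) big_ord_recl.
rewrite -scalemxAl -scalemxAr scalerA (Abar_mod_lift r n beta_prim).
congr (_ *: (_ *m _)); apply: eq_bigr => j _.
by rewrite (tens_idX p_gt0 n_eq) (tens_id_Abar p_gt0 n_eq).
Qed.

Lemma Dr1E (D : 'M[K]_n) : Dr beta p 1 D <-> exists c e, c != 0 /\ D = c *: Abar beta p 1 0 n ^+ e.
Proof.
split=> [[c [e [c_neq0 ->]]] | [c [e [c_neq0 ->]]]].
  by exists c, (e ord0); rewrite big_ord_recl big_ord0 mulmx1.
by exists c, (fun _ => e); rewrite big_ord_recl big_ord0 mulmx1.
Qed.

Lemma Dr1_tens_id_comm (D : 'M[K]_n) (X : 'M[K]_k) : Dr beta p 1 D -> T X *m D = D *m T X.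
Proof.
move=> /Dr1E [c [e [_ ->]]]; rewrite -scalemxAl -scalemxAr; congr (_ *: _).
elim: e => [|e IH]; first by rewrite expr0 -idmxE mulmx1 mul1mx.
by rewrite exprS -mulmxE mulmxA (tens_id_Abar_comm p_gt0 n_eq) -!mulmxA IH.
Qed.

Lemma tens_id_tens_id_pow (h : 'M[K]_k') :
  T (tens_id (p ^ r) k h) = tens_id (p ^ r.+1) n h.
Proof. by rewrite (tens_id_tens_id _ p_gt0 n_eq) ?expn_gt0 ?p_gt0 // expnSr. Qed.

(* Conjugating by [T g] leaves the [D_1] factor alone and transports the decomposition of [H]. *)
Lemma pgl_conj_tens_lift (H : 'M[K]_k -> Prop) (H' : 'M[K]_k' -> Prop) :
  pgl_conj H (pgl_prod (@Dr K beta p r k) (@tens_group K k' (p ^ r) k H')) ->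
  pgl_conj (pgl_prod (@Dr K beta p 1 n) (@tens_group K k p n H))
           (pgl_prod (@Dr K beta p r.+1 n) (@tens_group K k' (p ^ r.+1) n H')).
Proof.
move=> [g ug gH]; have [uTg invTg] := tens_id_unitmx p_gt0 n_eq ug.
exists (T g) => // Z; rewrite invTg; split.
- move=> [D1 [_ [D1E [h Hh ->] ->]]].
  have -> : T g *m (D1 *m T h) *m T (invmx g) = D1 *m T (g *m h *m invmx g).
    by rewrite !(tens_idM p_gt0 n_eq) !mulmxA (Dr1_tens_id_comm _ D1E).
  have [_ [_ [[c [e' [c_neq0 ->]]] [h' Hh' ->] ->]]] := proj1 (gH h) Hh.
  have [c1 [e1 [c1_neq0 ->]]] := proj1 (Dr1E D1) D1E.
  pose e (s : 'I_r.+1) := if unlift ord0 s is Some j then e' j else e1.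
  have -> : e1 = e ord0 by rewrite /e unlift_none.
  have -> : \big[mulmx/1%:M]_(j < r) Abar beta p r j k ^+ e' j =
            \big[mulmx/1%:M]_(j < r) Abar beta p r j k ^+ e (lift ord0 j).
    by apply: eq_bigr => j _; rewrite /e liftK.
  rewrite (tens_idM p_gt0 n_eq) mulmxA Dr_mul_tens_id tens_id_tens_id_pow.
  exists ((c1 * c) *: \big[mulmx/1%:M]_(s' < r.+1) Abar beta p r.+1 s' n ^+ e s'),
    (tens_id (p ^ r.+1) n h'); split=> //; last by exists h'.
  by exists (c1 * c), e; rewrite mulf_neq0.
- move=> [_ [_ [[c [e [c_neq0 ->]]] [h' Hh' ->] gZ]]].
  rewrite -[c]mul1r -Dr_mul_tens_id -tens_id_tens_id_pow in gZ.
  set D1 := 1 *: _ in gZ; set D' := c *: _ in gZ.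
  have D1E : Dr beta p 1 D1 by apply/Dr1E; exists 1, (e ord0); rewrite oner_neq0.
  pose h := invmx g *m (D' *m tens_id (p ^ r) k h') *m g.
  have Hh : H h.
    apply/gH; rewrite /h !mulmxA mulmxV // mul1mx mulmxK //.
    exists D', (tens_id (p ^ r) k h'); split=> //; last by exists h'.
    by exists c, (fun j => e (lift ord0 j)).
  exists D1, (T h); split=> //; first by exists h.
  have := congr1 (fun Y => T (invmx g) *m Y *m T g) gZ.
  rewrite /= -invTg !mulmxA mulVmx // mul1mx mulmxKV // => ->.
  by rewrite invTg (Dr1_tens_id_comm _ D1E) /h !(tens_idM p_gt0 n_eq) !mulmxA.
Qed.

End TensorLift.

Lemma pgl_toral_diag (K : fieldType) m (S : 'M[K]_m -> Prop) :
  (forall M, S M -> is_diag_mx M) -> pgl_toral S.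
Proof. by move=> Sdiag; exists 1%:M => [|M /Sdiag]; rewrite ?unitmx1 // mul1mx invmx1 mulmx1. Qed.

Lemma pgl_diag_peel (K : fieldType) p (beta : K) n (E : 'M[K]_n -> Prop) :
  prime p -> p.-primitive_root beta ->
  pgl_elem_abelian p E -> (forall M, E M -> is_diag_mx M) ->
  (exists g A, [/\ pgl_centralizer E g, E A & g *m A <> A *m g]) ->
  exists k (H : 'M[K]_k -> Prop),
    [/\ n = (k * p)%N, pgl_elem_abelian p H, (forall h, H h -> is_diag_mx h) &
        pgl_conj E (pgl_prod (@Dr K beta p 1 n) (@tens_group K k p n H))].
Proof.
move=> p_prime beta_prim Eab Ediag [g [A [Cg EA gA_neq]]].
have [sigma sigma_supp] := unitmx_perm_support (proj1 Cg).
have [A0 EA0 wA0] := exists_weight_generator p_prime beta_prim Eab Ediag Cg sigma_supp EA gA_neq.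
have Eweight M : E M -> exists e, perm_weight sigma (beta ^+ e) M.
  move=> EM; have [e [_ wM]] :=
    pgl_centralizer_weight beta_prim Eab Ediag Cg sigma_supp EM.
  by exists e.
have [n0 | n_gt0] := posnP n.
  by case: gA_neq; apply/matrixP => i; have := ltn_ord i; rewrite {2}n0.
pose i0 := Ordinal n_gt0.
exists (block_size A0 i0), (@base_group _ _ E sigma A0 i0); split.
- exact: (@block_count _ _ beta _ E sigma A0 i0 p_prime beta_prim Eab Ediag EA0 wA0).
- exact: base_group_elem_abelian.
- exact: base_group_diag.
- by apply: (pgl_conj_block_decomposition i0).
Qed.

Lemma pgl_diag_decomposition (K : closedFieldType) p (beta : K) :
  prime p -> p.-primitive_root beta ->
  forall n (E : 'M[K]_n -> Prop), pgl_elem_abelian p E -> (forall M, E M -> is_diag_mx M) ->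
  (exists g A, [/\ pgl_centralizer E g, E A & g *m A <> A *m g]) ->
  exists r k, [/\ (0 < r)%N, n = (p ^ r * k)%N &
    exists H : 'M[K]_k -> Prop,
      [/\ pgl_elem_abelian p H, pgl_toral H & pgl_connected (pgl_centralizer H)] /\
      pgl_conj E (pgl_prod (@Dr K beta p r n) (@tens_group K k (p ^ r) n H))].
Proof.
move=> p_prime beta_prim; elim/ltn_ind => n IH E Eab Ediag noncentral.
have [k [H [n_eq Hab Hdiag EH]]] := pgl_diag_peel p_prime beta_prim Eab Ediag noncentral.
have Htoral := pgl_toral_diag Hdiag.
have [Hconn | /pgl_disconnected_centralizer H_noncentral] :=
  classic (pgl_connected (pgl_centralizer H)).
  by exists 1%N, k; rewrite expn1 mulnC; split=> //; exists H.
have [g [A [_ _ gA_neq]]] := H_noncentral.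
have k_lt_n : (k < n)%N.
  rewrite n_eq ltn_Pmulr ?prime_gt1 // lt0n; apply/eqP => k0; apply: gA_neq.
  by apply/matrixP => i; have := ltn_ord i; rewrite {2}k0.
have [r [k' [r_gt0 k_eq [H' [H'props HH']]]]] := IH k k_lt_n H Hab Hdiag H_noncentral.
exists r.+1, k'; split=> //; first by rewrite n_eq k_eq expnSr mulnAC.
exists H'; split=> //; apply: pgl_conj_trans EH _.
by apply: pgl_conj_tens_lift HH'; rewrite ?prime_gt0 // k_eq mulnC.
Qed.

Theorem theorem4p27 (K : closedFieldType) (p s t : nat) (beta : K) :
  prime p -> odd p -> p \notin [pchar K] ->
  coprime p t -> (1 <= s)%N -> (1 <= t)%N ->
  p.-primitive_root beta ->
  forall E : 'M[K]_(p ^ s * t) -> Prop,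
    pgl_elem_abelian p E -> pgl_toral E ->
    ~ pgl_connected (pgl_centralizer E) ->
    exists r k : nat,
      [/\ (1 <= r <= s)%N, (p ^ s * t = p ^ r * k)%N &
      exists H : 'M[K]_k -> Prop,
        (H = @pgl_trivial K k \/
         [/\ pgl_elem_abelian p H, pgl_toral H & pgl_connected (pgl_centralizer H)])
        /\ pgl_conj E (pgl_prod (@Dr K beta p r (p ^ s * t)%N)
                               (@tens_group K k (p ^ r)%N (p ^ s * t)%N H))].
Proof.
move=> p_prime _ _ p_coprime_t _ _ beta_prim E Eab [g0 ug0 Etoral] Edisc.
have ug0i : invmx g0 \in unitmx by rewrite unitmx_inv.
pose E0 M := E (conjmx (invmx g0) M).
have E0ab : pgl_elem_abelian p E0 := pgl_elem_abelian_conjmx ug0i Eab.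
have E0diag M : E0 M -> is_diag_mx M by move/Etoral; rewrite -conjumx // conjmxVK.
have E0_noncentral : exists g A, [/\ pgl_centralizer E0 g, E0 A & g *m A <> A *m g].
  have [g [A [Cg EA gA_neq]]] := pgl_disconnected_centralizer Edisc.
  exists (conjmx g0 g), (conjmx g0 A); split.
  - by rewrite -[g0 in conjmx g0 g]invmxK; apply: pgl_centralizer_conjmx.
  - by rewrite /E0 conjmxK.
  - by rewrite -!conjumxM // => /(can_inj (fun M => @conjmxK _ _ g0 M ug0)).
have [r [k [r_gt0 n_eq [H [Hprops E0H]]]]] :=
  pgl_diag_decomposition p_prime beta_prim E0ab E0diag E0_noncentral.
exists r, k; split=> //.
  have : (p ^ r %| p ^ s * t)%N by rewrite n_eq dvdn_mulr.
  by rewrite r_gt0 Gauss_dvdl ?coprimeXl // dvdn_Pexp2l ?prime_gt1.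
by exists H; split; [right | exact: pgl_conj_trans (pgl_conj_conjmx _ ug0) E0H].
Qed.
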